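(* Let $w:[0,1]\to\mathbb{R}^+$ be a non-increasing differentiable function (extended to $\mathbb{R}$ by $w(y)=w(0)$ for $y\le0$, $w(y)=w(1)$ for $y\ge1$), and let $R$ be a $k\times k$ doubly stochastic matrix with eigenvalues $1,\lambda_1,\dots,\lambda_s$. Then $\frac1k\mathbf 1$ is a stable equilibrium of the ODE $\dot y=h(y)$, where $h(y)=\frac{\mathbf{w}(y)}{S_w(y)}R-y$, if $$\Re(\lambda_i)>\frac{k\,w(1/k)}{w'(1/k)}\qquad\text{for all } i=1,\dots,s.$$
   Context: $\mathbf 1=(1,\dots,1)\in\mathbb{R}^k$ (row vector). For $y\in\mathbb{R}^k$, $\mathbf{w}(y)=(w(y_1),\dots,w(y_k))$ and $S_w(y)=\sum_i w(y_i)$. $R$ doubly stochastic means nonnegative entries with all row and column sums $1$; $1$ is its maximal eigenvalue and $\lambda_1,\dots,\lambda_s$ denote its remaining distinct eigenvalues. An equilibrium $x^*$ of $\dot y=h(y)$ (i.e. $h(x^* )=0$) is called stable if all eigenvalues of the Jacobian matrix of $h$ at $x^*$ have negative real part. *)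

From HB Require Import structures.
From mathcomp Require Import all_boot all_order all_algebra.
From mathcomp Require Import all_classical all_reals all_analysis.
From mathcomp Require Import complex.
Set Implicit Arguments. Unset Strict Implicit. Unset Printing Implicit Defensive.
Import Order.TTheory GRing.Theory Num.Theory numFieldNormedType.Exports.
Local Open Scope ring_scope.

Definition doubly_stochastic (R : realType) (k : nat) (A : 'M[R]_k) : Prop :=
  [/\ forall i j, 0 <= A i j,
      forall i, \sum_j A i j = 1 &
      forall j, \sum_i A i j = 1].

Definition ceigenvalue (R : realType) (n : nat) (A : 'M[R]_n) (z : R[i]) : bool :=
  eigenvalue (map_mx (fun x : R => (x%:C)%C) A) z.

Definition wvec (R : realType) (k : nat) (w : R -> R) (y : 'rV[R]_k) : 'rV[R]_k :=
  \row_i w (y 0 i).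
Definition Sw (R : realType) (k : nat) (w : R -> R) (y : 'rV[R]_k) : R :=
  \sum_i w (y 0 i).

Definition hfield (R : realType) (k : nat) (w : R -> R) (A : 'M[R]_k)
  (y : 'rV[R]_k) : 'rV[R]_k :=
  (Sw w y)^-1 *: (wvec w y *m A) - y.

(* x is a stable equilibrium of y' = f(y): f(x) = 0, f differentiable at x
   (so the Jacobian exists) and every (complex) eigenvalue of the Jacobian
   of f at x has negative real part. *)
Definition stable_equilibrium (R : realType) (k : nat)
  (f : 'rV[R]_k -> 'rV[R]_k) (x : 'rV[R]_k) : Prop :=
  [/\ f x = 0, differentiable f x &
      forall z : R[i], ceigenvalue (jacobian f x) z -> complex.Re z < 0].

(* At the uniform point x = (1/k, ..., 1/k) all weights equal c = w(1/k) and
   S_w(x) = k c, so h(x) = 1 R / k - x = 0 because the columns of R sum to 1.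
   Differentiating the quotients w(y_i) / S_w(y) at x gives the Jacobian
   J = a (R - P) - I, where a = w'(1/k) / (k c) <= 0 as w is non-increasing and
   P = 1^T 1 / k is the averaging matrix.  Since R P = P = P P, an eigenvector of
   R - P for a nonzero eigenvalue is annihilated by P, hence is an eigenvector of R;
   so every eigenvalue of J is -1 or a lambda - 1 for an eigenvalue lambda of R.
   For lambda = 1 this is a - 1 < 0, and otherwise Re (a lambda) < 1 is exactly the
   hypothesis Re lambda > 1 / a = k c / w'(1/k). *)

From HB Require Import structures.
From mathcomp Require Import all_boot all_order all_algebra.
From mathcomp Require Import all_classical all_reals all_analysis.
From mathcomp Require Import complex.
From mathcomp Require Import ring lra.
Set Implicit Arguments. Unset Strict Implicit. Unset Printing Implicit Defensive.
Import Order.TTheory GRing.Theory Num.Theory numFieldNormedType.Exports.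
Local Open Scope ring_scope.
Local Open Scope classical_set_scope.

Section Differential.
Context {R : numFieldType}.

Lemma is_diff_sum (V W : normedModType R) (I : Type) (r : seq I) (P : pred I)
    (f df : I -> V -> W) (x : V) :
  (forall i, P i -> is_diff x (f i) (df i)) ->
  is_diff x (\sum_(i <- r | P i) f i) (\sum_(i <- r | P i) df i).
Proof.
move=> dfx; elim/big_rec2: _ => [|i F dF Pi dFx]; first exact: (is_diff_cst (0 : W)).
exact: is_diffD (dfx i Pi) dFx.
Qed.

Lemma is_diffV (V : normedModType R) (f df : V -> R) (x : V) :
  is_diff x f df -> f x != 0 ->
  is_diff x (fun y => (f y)^-1) (fun v => - (f x) ^- 2 * df v).
Proof.
move=> dfx fx0; apply: DiffDef; first exact: differentiableV.
by rewrite diffV // diff_val.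
Qed.

Lemma is_diffZl (V W : normedModType R) (k dk : V -> R) (u : W) (x : V) :
  is_diff x k dk -> is_diff x (fun y => k y *: u) (fun v => dk v *: u).
Proof.
move=> dkx; apply: DiffDef; first exact: differentiableZl.
by rewrite diffZl // diff_val.
Qed.

Lemma is_diff_row_coord n (x : 'rV[R]_n) i :
  is_diff x (fun y : 'rV[R]_n => y 0 i) (fun v => v 0 i).
Proof.
have coord_linear : linear (fun y : 'rV[R]_n => y 0 i) by move=> a u v; rewrite !mxE.
pose coord : {linear 'rV[R]_n -> R} :=
  HB.pack (fun y : 'rV[R]_n => y 0 i) (GRing.isLinear.Build _ _ _ _ _ coord_linear).
apply: DiffDef; first exact: differentiable_coord.
rewrite -[fun y : 'rV[R]_n => y 0 i]/(coord : _ -> _) diff_lin //.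
exact: coord_continuous.
Qed.

Lemma is_diff_derive1 (f : R -> R) (t : R) :
  derivable f t 1 -> is_diff t f (fun h => h * derive1 f t).
Proof.
move=> df; apply: DiffDef; first exact/derivable1_diffP.
by rewrite deriv1E.
Qed.

Lemma jacobian_is_diff n m (f : 'rV[R]_n -> 'rV[R]_m) (x : 'rV[R]_n)
    (M : 'M[R]_(n, m)) :
  is_diff x f (mulmx^~ M) -> jacobian f x = M.
Proof. by move=> dfx; apply/matrixP => i j; rewrite /jacobian diff_val mxE -rowE mxE. Qed.

End Differential.

Lemma nonpos_mulr_lt1 (R : realFieldType) (a b : R) : a <= 0 -> a^-1 < b -> a * b < 1.
Proof.
rewrite le_eqVlt => /predU1P[-> _|a_lt0 ab]; first by rewrite mul0r ltr01.
by rewrite -(mulfV (ltr0_neq0 a_lt0)) ltr_nM2l.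
Qed.

Lemma nonincreasing_derive1_le0 (R : realFieldType) (f : R -> R) (a b x : R) :
  (forall y z, a <= y -> y <= z -> z <= b -> f z <= f y) -> a < x < b ->
  derivable f x 1 -> derive1 f x <= 0.
Proof.
move=> f_nincr /andP[ax xb] df; rewrite derive1E; apply: limr_le; first exact: df.
have e_gt0 : 0 < Num.min (x - a) (b - x) by rewrite lt_min !subr_gt0 ax xb.
near=> h.
have h_neq0 : h != 0 by near: h; exact: nbhs_dnbhs_neq.
have /ltr_normlP[] : `|h| < Num.min (x - a) (b - x) by near: h; exact: dnbhs0_lt.
rewrite !lt_min => /andP[hxa _] /andP[_ hbx].
rewrite /= [h%:A]mulr1 -[_ *: _]/(_ * _); have [h_lt0|h_gt0|h_eq0] := ltgtP h 0.
- by rewrite nmulr_rle0 ?invr_lt0 // subr_ge0; apply: f_nincr; lra.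
- by rewrite pmulr_rle0 ?invr_gt0 // subr_le0; apply: f_nincr; lra.
- by rewrite h_eq0 eqxx in h_neq0.
Unshelve. all: end_near. Qed.

Section MeanMatrix.
Context {F : fieldType}.

Definition mean_mx k : 'M[F]_k := k%:R^-1 *: const_mx 1.

Lemma mulmx_mean_mx m k (M : 'M[F]_(m, k)) :
  M *m mean_mx k = \matrix_(i, j) (k%:R^-1 * \sum_l M i l).
Proof.
apply/matrixP => i j; rewrite !mxE mulr_sumr; apply: eq_bigr => l _.
by rewrite !mxE mulr1 mulrC.
Qed.

Lemma row_stochastic_mulmx_mean_mx k (A : 'M[F]_k) :
  (k%:R : F) != 0 -> (forall i, \sum_j A i j = 1) -> A *m mean_mx k = mean_mx k.
Proof.
move=> k_neq0 rowA; apply/matrixP => i j; rewrite mulmx_mean_mx !mxE rowA.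
by rewrite mulr1.
Qed.

Lemma mean_mx_mulmx_col_stochastic k (A : 'M[F]_k) :
  (forall j, \sum_i A i j = 1) -> mean_mx k *m A = mean_mx k.
Proof.
move=> colA; apply/matrixP => i j; rewrite !mxE.
under eq_bigr do rewrite !mxE mulr1.
by rewrite -mulr_sumr colA mulr1.
Qed.

Lemma mean_mx_idem k : (k%:R : F) != 0 -> mean_mx k *m mean_mx k = mean_mx k :> 'M[F]_k.
Proof.
move=> k_neq0; apply: row_stochastic_mulmx_mean_mx => // i.
under eq_bigr do rewrite !mxE mulr1.
by rewrite sumr_const card_ord -[_ *+ k]mulr_natr mulVf.
Qed.

Lemma eigenvalue_scale_sub1 n (M : 'M[F]_n) a z :
  eigenvalue (a *: M - 1%:M) z ->
  z = -1 \/ exists2 mu, eigenvalue M mu & z = a * mu - 1.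
Proof.
case/eigenvalueP => v; rewrite mulmxBr mulmx1 -scalemxAr => /eqP.
rewrite subr_eq -[X in _ + X]scale1r -scalerDl => /eqP vM v_neq0.
have [a0|a_neq0] := eqVneq a 0.
  left; move: vM; rewrite a0 scale0r => /esym/eqP.
  by rewrite scaler_eq0 (negPf v_neq0) orbF addr_eq0 => /eqP.
right; exists ((z + 1) / a); last by field.
apply/eigenvalueP; exists v => //.
by rewrite mulrC -scalerA -vM scalerA mulVf // scale1r.
Qed.

Lemma eigenvalue_deflation n (A P : 'M[F]_n) mu :
  (A - P) *m P = 0 -> eigenvalue (A - P) mu -> mu = 0 \/ eigenvalue A mu.
Proof.
move=> APP /eigenvalueP[v vAP v_neq0].
have [->|mu_neq0] := eqVneq mu 0; [by left | right].
have vP0 : v *m P = 0.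
  have /eqP : mu *: (v *m P) = 0 by rewrite scalemxAl -vAP -mulmxA APP mulmx0.
  by rewrite scaler_eq0 (negPf mu_neq0) => /eqP.
by apply/eigenvalueP; exists v; rewrite // -vAP mulmxBr vP0 subr0.
Qed.
End MeanMatrix.

Section VectorField.
Variable R : realType.

Lemma hfieldE k (w : R -> R) (A : 'M[R]_k) :
  hfield w A = \sum_i (fun y : 'rV[R]_k => (w (y 0 i) / Sw w y) *: row i A) - id.
Proof.
apply/funext => y; rewrite /hfield fct_sumE mulmx_sum_row scaler_sumr /=.
by congr (_ - _); apply: eq_bigr => i _; rewrite scalerA mxE mulrC.
Qed.

Lemma Sw_const k (w : R -> R) (t : R) : Sw w (const_mx t : 'rV[R]_k) = k%:R * w t.
Proof.
rewrite /Sw (eq_bigr (fun=> w t)) => [|i _]; last by rewrite mxE.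
by rewrite sumr_const card_ord mulr_natl.
Qed.

Lemma is_diff_hfield_const k (w : R -> R) (A : 'M[R]_k) (t : R) :
  derivable w t 1 -> k%:R * w t != 0 ->
  is_diff (const_mx t : 'rV[R]_k) (hfield w A)
    (mulmx^~ ((derive1 w t / (k%:R * w t)) *: ((1%:M - mean_mx k) *m A) - 1%:M)).
Proof.
move=> dw Sx0; set x : 'rV[R]_k := const_mx t.
have dwi i : is_diff x (fun y => w (y 0 i)) (fun v => v 0 i * derive1 w t).
  have dwx : is_diff (x 0 i) w (fun h => h * derive1 w t).
    by rewrite mxE; exact: is_diff_derive1.
  exact: is_diff_comp (is_diff_row_coord x i) dwx.
have dS : is_diff x (Sw w) (fun v => \sum_i v 0 i * derive1 w t).
  by have := is_diff_sum (index_enum 'I_k) (fun i (_ : true) => dwi i); rewrite !fct_sumE.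
have dSV : is_diff x (fun y => (Sw w y)^-1)
    (fun v => - (k%:R * w t) ^- 2 * \sum_i v 0 i * derive1 w t).
  by rewrite -(Sw_const k w t); apply: is_diffV => //; rewrite Sw_const.
have dq i := is_diffM (dwi i) dSV.
rewrite hfieldE; apply: is_diff_eq.
  apply: is_diffB.
  by apply: is_diff_sum => i _; apply: is_diffZl; exact: dq.
apply/funext => v; rewrite fct_sumE /=.
rewrite mulmxBr mulmx1 -scalemxAr mulmxA mulmxBr mulmx1 mulmx_mean_mx.
rewrite mulmx_sum_row scaler_sumr.
congr (_ - _); apply: eq_bigr => i _; rewrite scalerA; congr (_ *: _).
rewrite !fctE /= !mxE Sw_const -mulr_suml /GRing.scale /=.
by field; rewrite -negb_or -mulf_eq0.
Qed.

Lemma hfield_const_eq0 k (w : R -> R) (A : 'M[R]_k) :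
  (0 < k)%N -> w k%:R^-1 != 0 -> (forall j, \sum_i A i j = 1) ->
  hfield w A (const_mx k%:R^-1) = 0.
Proof.
move=> k_gt0 w_neq0 colA; apply/rowP => j.
have k_neq0 : k%:R != 0 :> R by rewrite pnatr_eq0 -lt0n.
rewrite /hfield Sw_const !mxE.
under eq_bigr do rewrite !mxE.
by rewrite -mulr_sumr colA; field; rewrite k_neq0 w_neq0.
Qed.

Lemma is_diff_hfield_dim1 (w : R -> R) (A : 'M[R]_1) (x : 'rV[R]_1) :
  (forall y, w y != 0) -> (forall j, \sum_i A i j = 1) ->
  is_diff x (hfield w A) (fun v => - v).
Proof.
move=> w_neq0 colA.
have -> : hfield w A = cst (const_mx 1) - id.
  apply/funext => y; apply/rowP => j; have := colA j; rewrite big_ord1 => A1.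
  by rewrite /hfield /Sw !mxE !big_ord1 !mxE A1 mulr1 mulVf.
by apply: is_diff_eq; apply/funext => v; rewrite /= sub0r.
Qed.

Lemma extension_gt0 (w : R -> R) :
  (forall y, 0 <= y <= 1 -> 0 < w y) ->
  (forall y, y <= 0 -> w y = w 0) -> (forall y, 1 <= y -> w y = w 1) ->
  forall y, 0 < w y.
Proof.
move=> w_pos w_left w_right y.
have [y_le0|y_gt0] := leP y 0; first by rewrite w_left ?w_pos ?lexx ?ler01.
have [y_ge1|y_lt1] := leP 1 y; first by rewrite w_right ?w_pos ?lexx ?ler01.
by rewrite w_pos // !ltW.
Qed.

Lemma ceigenvalue_jacobian k (A : 'M[R]_k) (a : R) z :
  (0 < k)%N -> (forall i, \sum_j A i j = 1) ->
  ceigenvalue (a *: (A - mean_mx k) - 1%:M) z ->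
  z = -1 \/ exists2 mu, ceigenvalue A mu & z = (a%:C)%C * mu - 1.
Proof.
move=> k_gt0 rowA; have k_neq0 : k%:R != 0 :> R by rewrite pnatr_eq0 -lt0n.
set f := real_complex R.
have deflated : (map_mx f A - map_mx f (mean_mx k)) *m map_mx f (mean_mx k) = 0.
  rewrite -map_mxB -map_mxM mulmxBl row_stochastic_mulmx_mean_mx // mean_mx_idem //.
  by rewrite subrr map_mx0.
rewrite /ceigenvalue -[fun x => _]/f map_mxB map_mxZ map_mx1 map_mxB.
case/eigenvalue_scale_sub1 => [|[mu]]; first by left.
case/(eigenvalue_deflation deflated) => [->|Amu] ->; last by right; exists mu.
by left; rewrite mulr0 sub0r.
Qed.

Lemma ceigenvalue_jacobian_Re_lt0 k (A : 'M[R]_k) (a : R) z :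
  (0 < k)%N -> (forall i, \sum_j A i j = 1) -> a < 1 ->
  (forall mu, ceigenvalue A mu -> mu != 1 -> a * complex.Re mu < 1) ->
  ceigenvalue (a *: (A - mean_mx k) - 1%:M) z -> complex.Re z < 0.
Proof.
move=> k_gt0 rowA a_lt1 eigA /ceigenvalue_jacobian[//|//|->|[mu Amu ->]].
  by rewrite /= ltrN10.
have -> : complex.Re ((a%:C)%C * mu - 1) = a * complex.Re mu - 1.
  by case: mu {Amu} => ? ? /=; rewrite mul0r subr0.
rewrite subr_lt0; have [->|mu_neq1] := eqVneq mu 1; first by rewrite /= mulr1.
exact: eigA.
Qed.

End VectorField.

Theorem proposition3 (R : realType) (k : nat) (w : R -> R) (A : 'M[R]_k) :
  (0 < k)%N ->
  (* w : [0,1] -> R^+ *)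
  (forall y, 0 <= y <= 1 -> 0 < w y) ->
  (* non-increasing on [0,1] *)
  (forall x y, 0 <= x -> x <= y -> y <= 1 -> w y <= w x) ->
  (* differentiable on [0,1] (one-sided at the endpoints) *)
  (forall y, 0 < y < 1 -> derivable w y 1) ->
  cvg ((fun t : R => t^-1 * (w t - w 0)) @ 0^'+) ->
  cvg ((fun t : R => t^-1 * (w (1 + t) - w 1)) @ 0^'-) ->
  (* extension to R *)
  (forall y, y <= 0 -> w y = w 0) ->
  (forall y, 1 <= y -> w y = w 1) ->
  doubly_stochastic A ->
  (forall z : R[i], ceigenvalue A z -> z != 1 ->
     (k%:R * w (k%:R^-1)) / derive1 w (k%:R^-1) < complex.Re z) ->
  stable_equilibrium (hfield w A) (const_mx (k%:R^-1)).
Proof.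
move=> k_gt0 w_pos w_nincr w_der _ _ w_left w_right [_ rowA colA] eigA.
have w_gt0 := extension_gt0 w_pos w_left w_right.
have [a [a_le0 eig_a dh]] : exists a : R, [/\ a <= 0,
    forall mu, ceigenvalue A mu -> mu != 1 -> a * complex.Re mu < 1 &
    is_diff (const_mx k%:R^-1 : 'rV[R]_k) (hfield w A)
      (mulmx^~ (a *: (A - mean_mx k) - 1%:M))].
  have [k1|k_neq1] := eqVneq k 1%N.
  - subst k; exists 0; split => [//|mu _ _|]; first by rewrite mul0r ltr01.
    apply: is_diff_eq (is_diff_hfield_dim1 _ (fun y => lt0r_neq0 (w_gt0 y)) colA) _.
    by apply/funext => v; rewrite scale0r sub0r mulmxN mulmx1.
  - have k_gt1 : (1 < k)%N by rewrite ltn_neqAle eq_sym k_neq1.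
    have t01 : 0 < (k%:R^-1 : R) < 1.
      by rewrite invr_gt0 ltr0n k_gt0 invf_lt1 ?ltr0n // ltr1n.
    set a := derive1 w k%:R^-1 / (k%:R * w k%:R^-1).
    have a_le0 : a <= 0.
      apply: mulr_le0_ge0; last by rewrite invr_ge0 mulr_ge0 ?ler0n ?ltW.
      exact: nonincreasing_derive1_le0 w_nincr t01 (w_der _ t01).
    exists a; split => //.
    + move=> mu Amu mu_neq1; apply: nonpos_mulr_lt1 a_le0 _.
      by rewrite invf_div; exact: eigA.
    + have -> : A - mean_mx k = (1%:M - mean_mx k) *m A.
        by rewrite mulmxBl mul1mx mean_mx_mulmx_col_stochastic.
      apply: is_diff_hfield_const; first exact: w_der.
      by rewrite mulf_neq0 ?lt0r_neq0 ?ltr0n.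
split; first exact: hfield_const_eq0 (lt0r_neq0 (w_gt0 _)) colA.
  exact: ex_diff.
move=> z; rewrite (jacobian_is_diff dh).
by apply: ceigenvalue_jacobian_Re_lt0 => //; apply: le_lt_trans a_le0 ltr01.
Qed.
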